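(* Let $X$ be a continuum (a connected compact metric space). Then for every real $t \ge \operatorname{diam} X$ with $t>0$ and every positive integer $p$, $$d_{GH}(t\Delta_p, X) = d_{GH}\bigl(\mathcal{H}(t\Delta_p), \mathcal{H}(X)\bigr).$$
   Context: A simplex $t\Delta_p$ is the metric space with $p$ points, any two distinct ones at distance $t$. For a compact metric space $X$, $\mathcal{H}(X)$ is the set of all nonempty closed subsets of $X$ with the Hausdorff distance $|AB| = \max\{\sup_{a\in A}\inf_{b\in B}|ab|, \sup_{b\in B}\inf_{a\in A}|ab|\}$. $d_{GH}$ is the Gromov–Hausdorff distance (the infimum of $r$ such that there is a metric space $Z$ containing isometric copies $X',Y'$ of the two spaces with Hausdorff distance $|X'Y'|_Z\le r$). *)

From Stdlib Require Import Reals Lra ClassicalEpsilon.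
Open Scope R_scope.

Record MSpace := { carrier :> Type; dist : carrier -> carrier -> R }.
Arguments dist {m} _ _.

Definition is_metric (X : MSpace) : Prop :=
  (forall x y : X, 0 <= dist x y) /\
  (forall x y : X, dist x y = 0 <-> x = y) /\
  (forall x y : X, dist x y = dist y x) /\
  (forall x y z : X, dist x z <= dist x y + dist y z).

(* Supremum / infimum of a set of reals (meaningful for nonempty bounded sets). *)
Definition Rsup (E : R -> Prop) : R := epsilon (inhabits 0) (fun s => is_lub E s).
Definition Rinf (E : R -> Prop) : R := - Rsup (fun x => E (- x)).

Definition hausdorff {X : MSpace} (A B : X -> Prop) : R :=
  Rmax (Rsup (fun r => exists a, A a /\ r = Rinf (fun s => exists b, B b /\ s = dist a b)))
       (Rsup (fun r => exists b, B b /\ r = Rinf (fun s => exists a, A a /\ s = dist a b))).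

Definition is_closed {X : MSpace} (A : X -> Prop) : Prop :=
  forall x : X, (forall eps, 0 < eps -> exists a, A a /\ dist x a < eps) -> A x.

Definition is_open {X : MSpace} (U : X -> Prop) : Prop :=
  forall x : X, U x -> exists eps, 0 < eps /\ forall y, dist x y < eps -> U y.

(* Sequential compactness (equivalent to compactness for metric spaces). *)
Definition compact (X : MSpace) : Prop :=
  forall u : nat -> X, exists (phi : nat -> nat) (l : X),
    (forall n, (phi n < phi (S n))%nat) /\
    (forall eps, 0 < eps -> exists N, forall n, (N <= n)%nat -> dist (u (phi n)) l < eps).

Definition connected (X : MSpace) : Prop :=
  forall U : X -> Prop, is_open U -> is_closed U ->
    (forall x, U x) \/ (forall x, ~ U x).

Definition continuum (X : MSpace) : Prop :=
  is_metric X /\ inhabited X /\ compact X /\ connected X.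

Definition diam (X : MSpace) : R :=
  Rsup (fun r => exists x y : X, r = dist x y).

Definition simplex (t : R) (p : nat) : MSpace :=
  {| carrier := { i : nat | (i < p)%nat };
     dist := fun i j => if Nat.eq_dec (proj1_sig i) (proj1_sig j) then 0 else t |}.

Definition hyperspace (X : MSpace) : MSpace :=
  {| carrier := { A : X -> Prop | is_closed A /\ exists x, A x };
     dist := fun A B => hausdorff (proj1_sig A) (proj1_sig B) |}.

Definition isometric_embedding {X Z : MSpace} (f : X -> Z) : Prop :=
  forall x y : X, dist (f x) (f y) = dist x y.

Definition image {X Z : MSpace} (f : X -> Z) : Z -> Prop :=
  fun z => exists x, f x = z.

Definition dGH (X Y : MSpace) : R :=
  Rinf (fun r => exists (Z : MSpace) (f : X -> Z) (g : Y -> Z),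
          is_metric Z /\ isometric_embedding f /\ isometric_embedding g /\
          hausdorff (image f) (image g) <= r).

From Stdlib Require Import Reals Lra Lia Classical ClassicalEpsilon List
  FunctionalExtensionality PropExtensionality ProofIrrelevance.
Open Scope R_scope.

(* For p >= 2, both t Δ_p and H(t Δ_p) have all distances equal to 0 or t, with
   t attained, while X and H(X) have diameter at most t and are e-chained for
   every e > 0: X because it is connected, H(X) because every closed set can be
   grown point by point, in steps of Hausdorff size < e, until it contains an
   e/2-net of the compact X, and is then e/2-close to X itself.  For such pairs
   d_GH = t/2.  For p = 1 both simplices are points, d_GH(point, Y) = diam Y / 2,
   and diam H(X) = diam X since singletons embed X isometrically into H(X). *)

Lemma Rle_of_forall_lt_add x y : (forall d, 0 < d -> x < y + d) -> x <= y.
Proof. intros H. apply Rnot_lt_le. intros Hlt. specialize (H (x - y)). lra. Qed.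

Lemma Rsup_eq (E : R -> Prop) s : is_lub E s -> Rsup E = s.
Proof.
  intros Hs. unfold Rsup.
  destruct (epsilon_spec (inhabits 0) (fun s => is_lub E s) (ex_intro _ s Hs)) as [H1 H2].
  destruct Hs as [H3 H4].
  apply Rle_antisym; [apply H2; exact H3 | apply H4; exact H1].
Qed.

Lemma Rsup_lub (E : R -> Prop) : (exists x, E x) -> bound E -> is_lub E (Rsup E).
Proof.
  intros Hne Hb. destruct (completeness E Hb Hne) as [m Hm].
  rewrite (Rsup_eq E m Hm). exact Hm.
Qed.

Lemma Rsup_ge (E : R -> Prop) x : bound E -> E x -> x <= Rsup E.
Proof. intros Hb Hx. apply (Rsup_lub E (ex_intro _ x Hx) Hb). exact Hx. Qed.

Lemma Rsup_le (E : R -> Prop) M : (exists x, E x) -> is_upper_bound E M -> Rsup E <= M.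
Proof. intros Hne HM. apply (Rsup_lub E Hne (ex_intro _ M HM)). exact HM. Qed.

Lemma Rinf_le (E : R -> Prop) m x : (forall y, E y -> m <= y) -> E x -> Rinf E <= x.
Proof.
  intros Hm Hx. unfold Rinf.
  assert (- x <= Rsup (fun y => E (- y))); [|lra].
  apply Rsup_ge.
  - exists (- m). intros y Hy. specialize (Hm _ Hy). lra.
  - rewrite Ropp_involutive. exact Hx.
Qed.

Lemma Rinf_ge (E : R -> Prop) m : (exists x, E x) -> (forall x, E x -> m <= x) -> m <= Rinf E.
Proof.
  intros [x Hx] Hm. unfold Rinf.
  assert (Rsup (fun y => E (- y)) <= - m); [|lra].
  apply Rsup_le.
  - exists (- x). rewrite Ropp_involutive. exact Hx.
  - intros y Hy. specialize (Hm _ Hy). lra.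
Qed.

Lemma Rinf_lt (E : R -> Prop) m : (exists x, E x) -> Rinf E < m -> exists x, E x /\ x < m.
Proof.
  intros Hne Hlt. apply NNPP. intros Hn.
  assert (m <= Rinf E); [|lra].
  apply Rinf_ge; auto. intros x Hx. apply Rnot_lt_le. intros Hxm. eauto.
Qed.

Lemma Rinf_eq (E : R -> Prop) v :
  (forall r, E r -> v <= r) -> (forall eps, 0 < eps -> E (v + eps)) -> Rinf E = v.
Proof.
  intros Hlow Happ. unfold Rinf. rewrite (Rsup_eq _ (- v)); [lra|split].
  - intros x Hx. specialize (Hlow _ Hx). lra.
  - intros b Hb. apply Rnot_lt_le. intros Hlt.
    specialize (Hb (- (v + (- v - b) / 2))). cbv beta in Hb.
    rewrite Ropp_involutive in Hb.
    assert (Hp : 0 < (- v - b) / 2) by lra. specialize (Hb (Happ _ Hp)). lra.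
Qed.

Section MetricAxioms.
Variable X : MSpace.
Hypothesis hX : is_metric X.

Lemma dist_ge0 (x y : X) : 0 <= dist x y.
Proof. apply hX. Qed.

Lemma dist_eq0 (x y : X) : dist x y = 0 -> x = y.
Proof. apply hX. Qed.

Lemma dist_xx (x : X) : dist x x = 0.
Proof. apply hX. reflexivity. Qed.

Lemma dist_sym (x y : X) : dist x y = dist y x.
Proof. apply hX. Qed.

Lemma dist_triangle (x y z : X) : dist x z <= dist x y + dist y z.
Proof. apply hX. Qed.

End MetricAxioms.

Section Hausdorff.
Variable X : MSpace.
Hypothesis hX : is_metric X.

Definition dist_set (a : X) (B : X -> Prop) : R :=
  Rinf (fun s => exists b, B b /\ s = dist a b).

Definition excess (A B : X -> Prop) : R :=
  Rsup (fun r => exists a, A a /\ r = dist_set a B).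

Definition approx_within (r : R) (A B : X -> Prop) : Prop :=
  forall a, A a -> forall d, 0 < d -> exists b, B b /\ dist a b < r + d.

Lemma hausdorff_excess (A B : X -> Prop) : hausdorff A B = Rmax (excess A B) (excess B A).
Proof.
  assert (Hswap : forall b, Rinf (fun s => exists a, A a /\ s = dist a b) = dist_set b A).
  { intros b. unfold dist_set. f_equal.
    apply functional_extensionality; intros s; apply propositional_extensionality.
    split; intros [a [Ha ->]]; exists a; split; auto; apply dist_sym; exact hX. }
  unfold hausdorff, excess. f_equal. f_equal.
  apply functional_extensionality; intros r; apply propositional_extensionality.
  split; intros [b [Hb ->]]; exists b; split; auto.
Qed.

Lemma hausdorff_sym (A B : X -> Prop) : hausdorff A B = hausdorff B A.
Proof. rewrite !hausdorff_excess. apply Rmax_comm. Qed.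

Lemma dist_set_le a (B : X -> Prop) b : B b -> dist_set a B <= dist a b.
Proof.
  intros Hb. apply (Rinf_le _ 0); [|eauto].
  intros s [c [_ ->]]. apply dist_ge0, hX.
Qed.

Lemma dist_set_lt a (B : X -> Prop) m :
  (exists b, B b) -> dist_set a B < m -> exists b, B b /\ dist a b < m.
Proof.
  intros [b Hb] Hlt.
  destruct (Rinf_lt _ _ (ex_intro _ _ (ex_intro _ b (conj Hb eq_refl))) Hlt)
    as [s [[c [Hc ->]] Hs]].
  eauto.
Qed.

Lemma excess_le (A B : X -> Prop) r :
  (exists a, A a) -> approx_within r A B -> excess A B <= r.
Proof.
  intros [a0 Ha0] Happ. apply Rsup_le; [eauto|].
  intros s [a [Ha ->]]. apply Rnot_lt_le. intros Hlt.
  destruct (Happ a Ha (dist_set a B - r)) as [b [Hb Hd]]; [lra|].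
  pose proof (dist_set_le a B b Hb). lra.
Qed.

Lemma excess_approx (A B : X -> Prop) M r :
  (exists b, B b) -> (forall a b, A a -> B b -> dist a b <= M) ->
  excess A B <= r -> approx_within r A B.
Proof.
  intros [b0 Hb0] HM Hr a Ha d Hd. apply dist_set_lt; [eauto|].
  assert (dist_set a B <= excess A B); [|lra].
  apply Rsup_ge; [|eauto].
  exists M. intros s [a' [Ha' ->]].
  eapply Rle_trans; [apply (dist_set_le a' B b0 Hb0)|auto].
Qed.

Lemma hausdorff_le (A B : X -> Prop) r : (exists a, A a) -> (exists b, B b) ->
  approx_within r A B -> approx_within r B A -> hausdorff A B <= r.
Proof.
  intros HA HB HAB HBA. rewrite hausdorff_excess.
  apply Rmax_lub; apply excess_le; auto.
Qed.

Lemma hausdorff_approx (A B : X -> Prop) M r : (exists a, A a) -> (exists b, B b) ->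
  (forall a b, A a -> B b -> dist a b <= M) -> hausdorff A B <= r ->
  approx_within r A B /\ approx_within r B A.
Proof.
  intros HA HB HM Hr. rewrite hausdorff_excess in Hr.
  split; eapply excess_approx; eauto.
  - eapply Rle_trans; [apply Rmax_l|exact Hr].
  - intros b a Hb Ha. rewrite dist_sym by exact hX. auto.
  - eapply Rle_trans; [apply Rmax_r|exact Hr].
Qed.

Lemma approx_within_subset (A B : X -> Prop) r :
  0 <= r -> (forall x, A x -> B x) -> approx_within r A B.
Proof. intros Hr HAB a Ha d Hd. exists a. rewrite dist_xx by exact hX. split; auto; lra. Qed.

Lemma approx_within_trans (A B C : X -> Prop) r1 r2 :
  approx_within r1 A B -> approx_within r2 B C -> approx_within (r1 + r2) A C.
Proof.
  intros HAB HBC a Ha d Hd.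
  destruct (HAB a Ha (d / 2)) as [b [Hb Hab]]; [lra|].
  destruct (HBC b Hb (d / 2)) as [c [Hc Hbc]]; [lra|].
  exists c. split; auto. pose proof (dist_triangle X hX a b c). lra.
Qed.

Lemma hausdorff_nonneg (A B : X -> Prop) M : (exists a, A a) -> (exists b, B b) ->
  (forall a b, A a -> B b -> dist a b <= M) -> 0 <= hausdorff A B.
Proof.
  intros [a Ha] HB HM. apply Rnot_lt_le. intros Hlt.
  destruct (hausdorff_approx A B M _ (ex_intro _ a Ha) HB HM (Rle_refl _)) as [Happ _].
  destruct (Happ a Ha (- hausdorff A B)) as [b [_ Hab]]; [lra|].
  pose proof (dist_ge0 X hX a b). lra.
Qed.

Lemma hausdorff_singleton (x y : X) : hausdorff (fun z => z = x) (fun z => z = y) = dist x y.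
Proof.
  apply Rle_antisym.
  - apply hausdorff_le; eauto.
    + intros a -> d Hd. exists y. split; auto; lra.
    + intros b -> d Hd. exists x. rewrite dist_sym by exact hX. split; auto; lra.
  - apply Rle_of_forall_lt_add. intros d Hd.
    assert (Hbound : forall a b, a = x -> b = y -> dist a b <= dist x y)
      by (intros a b -> ->; apply Rle_refl).
    destruct (hausdorff_approx (fun z => z = x) (fun z => z = y) _ _
                (ex_intro _ x eq_refl) (ex_intro _ y eq_refl) Hbound (Rle_refl _))
      as [Happ _].
    destruct (Happ x eq_refl d Hd) as [b [-> Hb]]. exact Hb.
Qed.

End Hausdorff.

Fixpoint greedy_seq {T : Type} (pick : list T -> T) (n : nat) : list T :=
  match n with O => nil | S n => pick (greedy_seq pick n) :: greedy_seq pick n end.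

Lemma greedy_seq_In {T : Type} (pick : list T -> T) m n :
  (m < n)%nat -> In (pick (greedy_seq pick m)) (greedy_seq pick n).
Proof.
  induction n as [|n IH]; intros Hmn; [lia|simpl].
  destruct (Nat.eq_dec m n) as [->|Hne]; [now left|right; apply IH; lia].
Qed.

Section Compactness.
Variable X : MSpace.
Hypothesis hX : is_metric X.

(* Otherwise picking, again and again, a point at distance >= d from all points
   picked so far gives a sequence with no convergent subsequence. *)
Lemma totally_bounded : compact X ->
  forall d, 0 < d -> exists F : list X, forall x, exists y, In y F /\ dist x y < d.
Proof.
  intros Hc d Hd. apply NNPP. intros Hnet.
  assert (Hfar : forall F : list X, exists x, forall y, In y F -> d <= dist x y).
  { intros F. apply NNPP. intros Hn. apply Hnet. exists F. intros x.
    apply NNPP. intros Hn'. apply Hn. exists x. intros y Hy.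
    apply Rnot_lt_le. intros Hlt. eauto. }
  set (pick := fun F => proj1_sig (constructive_indefinite_description _ (Hfar F))).
  assert (Hpick : forall F y, In y F -> d <= dist (pick F) y).
  { intros F. exact (proj2_sig (constructive_indefinite_description _ (Hfar F))). }
  set (u := fun n => pick (greedy_seq pick n)).
  destruct (Hc u) as [phi [l [Hphi Hl]]].
  destruct (Hl (d / 2)) as [N HN]; [lra|].
  pose proof (HN N (le_n _)) as H1. pose proof (HN (S N) (le_S _ _ (le_n _))) as H2.
  assert (H3 : d <= dist (u (phi (S N))) (u (phi N)))
    by exact (Hpick _ _ (greedy_seq_In pick _ _ (Hphi N))).
  pose proof (dist_triangle X hX (u (phi (S N))) l (u (phi N))).
  rewrite (dist_sym X hX l (u (phi N))) in *. lra.
Qed.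

Definition sum_dist (x0 : X) (F : list X) : R := fold_right (fun y s => dist x0 y + s) 0 F.

Lemma sum_dist_ge x0 F y : In y F -> dist x0 y <= sum_dist x0 F.
Proof.
  assert (Hpos : forall G, 0 <= sum_dist x0 G).
  { induction G as [|z G IH]; simpl; [lra|]. pose proof (dist_ge0 X hX x0 z). lra. }
  induction F as [|z F IH]; simpl; intros Hy; [contradiction|].
  pose proof (Hpos F). pose proof (dist_ge0 X hX x0 z).
  destruct Hy as [->|Hy]; [lra|]. specialize (IH Hy). lra.
Qed.

Lemma compact_bounded : compact X -> inhabited X -> exists M, forall x y : X, dist x y <= M.
Proof.
  intros Hc [x0]. destruct (totally_bounded Hc 1 Rlt_0_1) as [F HF].
  exists (2 + 2 * sum_dist x0 F). intros x x'.
  destruct (HF x) as [y [Hy Hxy]]. destruct (HF x') as [y' [Hy' Hxy']].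
  pose proof (sum_dist_ge x0 F y Hy). pose proof (sum_dist_ge x0 F y' Hy').
  pose proof (dist_triangle X hX x y x'). pose proof (dist_triangle X hX y x0 x').
  pose proof (dist_triangle X hX x0 y' x').
  rewrite (dist_sym X hX y x0), (dist_sym X hX y' x') in *. lra.
Qed.

Lemma diam_lub M : inhabited X -> (forall x y : X, dist x y <= M) ->
  is_lub (fun r => exists x y : X, r = dist x y) (diam X).
Proof.
  intros [x0] HM. apply Rsup_lub; [exists (dist x0 x0), x0, x0; auto|].
  exists M. intros r [x [y ->]]. auto.
Qed.

End Compactness.

Inductive chain {Y : MSpace} (e : R) : Y -> Y -> Prop :=
| chain_refl y : chain e y y
| chain_step y z w : chain e y z -> dist z w < e -> chain e y w.

Definition well_chained (Y : MSpace) : Prop := forall e, 0 < e -> forall y w : Y, chain e y w.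

Lemma chain_trans {Y : MSpace} e (y z w : Y) : chain e y z -> chain e z w -> chain e y w.
Proof.
  intros Hyz Hzw. induction Hzw as [|a b c _ IH Hbc]; auto.
  exact (chain_step e _ _ _ (IH Hyz) Hbc).
Qed.

Lemma chain_sym {Y : MSpace} (hY : is_metric Y) e (y z : Y) : chain e y z -> chain e z y.
Proof.
  intros H. induction H as [|y z w _ IH Hzw]; [constructor|].
  apply (chain_trans e _ z); auto. apply (chain_step e _ w); [constructor|].
  rewrite dist_sym by exact hY. exact Hzw.
Qed.

(* The points reachable from y by e-chains form a clopen set. *)
Lemma connected_well_chained (X : MSpace) : is_metric X -> connected X -> well_chained X.
Proof.
  intros hX Hconn e He y w.
  destruct (Hconn (chain e y)) as [H|H]; auto.
  - intros x Hx. exists e. split; auto. intros z Hz. eapply chain_step; eauto.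
  - intros x Hx. destruct (Hx e He) as [a [Ha Hd]]. eapply chain_step; [exact Ha|].
    rewrite dist_sym by exact hX. exact Hd.
  - exfalso. apply (H y). constructor.
Qed.

Lemma closed_union {X : MSpace} (A B : X -> Prop) :
  is_closed A -> is_closed B -> is_closed (fun x => A x \/ B x).
Proof.
  assert (Hgap : forall C : X -> Prop, is_closed C -> forall x, ~ C x ->
            exists e, 0 < e /\ forall c, C c -> e <= dist x c).
  { intros C HC x Hx. apply NNPP. intros Hn. apply Hx, HC. intros eps Heps.
    apply NNPP. intros Hn'. apply Hn. exists eps. split; auto.
    intros c Hc. apply Rnot_lt_le. intros Hlt. eauto. }
  intros HA HB x Hx. apply NNPP. intros Hn.
  destruct (Hgap A HA x ltac:(tauto)) as [e1 [He1 H1]].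
  destruct (Hgap B HB x ltac:(tauto)) as [e2 [He2 H2]].
  destruct (Hx (Rmin e1 e2)) as [a [[Ha|Ha] Hd]]; [apply Rmin_glb_lt; auto| |].
  - specialize (H1 a Ha). pose proof (Rmin_l e1 e2). lra.
  - specialize (H2 a Ha). pose proof (Rmin_r e1 e2). lra.
Qed.

Lemma closed_singleton {X : MSpace} (hX : is_metric X) (a : X) : is_closed (fun x => x = a).
Proof.
  intros x Hx. apply (dist_eq0 X hX). apply Rle_antisym; [|apply (dist_ge0 X hX)].
  apply Rle_of_forall_lt_add. intros d Hd. destruct (Hx d Hd) as [b [-> Hb]]. lra.
Qed.

Lemma closed_full {X : MSpace} : is_closed (fun _ : X => True).
Proof. intros x _. exact I. Qed.

Definition full_set {X : MSpace} (HX : inhabited X) : hyperspace X :=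
  exist _ (fun _ => True)
    (conj closed_full (match HX with inhabits x => ex_intro _ x I end)).

Lemma hyperspace_inhabited (X : MSpace) : inhabited X -> inhabited (hyperspace X).
Proof. intros HX. exact (inhabits (full_set HX)). Qed.

Section Hyperspace.
Variable X : MSpace.
Hypothesis hX : is_metric X.

Lemma hyperspace_nonempty (A : hyperspace X) : exists a, proj1_sig A a.
Proof. exact (proj2 (proj2_sig A)). Qed.

Lemma hyperspace_dist_le_of_approx (A B : hyperspace X) r :
  approx_within X r (proj1_sig A) (proj1_sig B) ->
  approx_within X r (proj1_sig B) (proj1_sig A) -> dist A B <= r.
Proof. apply hausdorff_le; auto; apply hyperspace_nonempty. Qed.

Lemma hyperspace_dist_le r : (forall x y : X, dist x y <= r) ->
  forall A B : hyperspace X, dist A B <= r.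
Proof.
  intros Hr A B.
  destruct (hyperspace_nonempty A) as [a Ha], (hyperspace_nonempty B) as [b Hb].
  apply hyperspace_dist_le_of_approx.
  - intros x _ d Hd. exists b. specialize (Hr x b). split; auto; lra.
  - intros y _ d Hd. exists a. specialize (Hr y a). split; auto; lra.
Qed.

Definition singleton_set (x : X) : hyperspace X :=
  exist _ (fun y => y = x) (conj (closed_singleton hX x) (ex_intro _ x eq_refl)).

Lemma hyperspace_dist_singleton (x y : X) : dist (singleton_set x) (singleton_set y) = dist x y.
Proof. exact (hausdorff_singleton X hX x y). Qed.

Lemma diam_hyperspace M : inhabited X -> (forall x y : X, dist x y <= M) ->
  diam (hyperspace X) = diam X.
Proof.
  intros HXi HM. destruct (diam_lub X M HXi HM) as [Hub Hlub].
  apply Rsup_eq. split.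
  - intros r [A [B ->]]. apply hyperspace_dist_le. intros x y. apply Hub. eauto.
  - intros u Hu. apply Hlub. intros r [x [y ->]].
    rewrite <- hyperspace_dist_singleton. apply Hu. eauto.
Qed.

Variable M : R.
Hypothesis HM : forall x y : X, dist x y <= M.

Lemma hyperspace_dist_approx (A B : hyperspace X) r : dist A B <= r ->
  approx_within X r (proj1_sig A) (proj1_sig B) /\
  approx_within X r (proj1_sig B) (proj1_sig A).
Proof. apply (hausdorff_approx X hX _ _ M); auto; apply hyperspace_nonempty. Qed.

Lemma hyperspace_metric : is_metric (hyperspace X).
Proof.
  split; [|split; [|split]].
  - intros A B. apply (hausdorff_nonneg X hX _ _ M); auto; apply hyperspace_nonempty.
  - intros A B. split.
    + intros H0. destruct (hyperspace_dist_approx A B 0 (Req_le _ _ H0)) as [HAB HBA].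
      destruct A as [A [HA nA]], B as [B [HB nB]]. simpl in *.
      assert (A = B) as <-; [|f_equal; apply proof_irrelevance].
      apply functional_extensionality; intros x; apply propositional_extensionality.
      split; intros Hx; [apply HB|apply HA]; intros eps Heps;
        [destruct (HAB x Hx eps Heps) as [y [Hy Hd]]
        |destruct (HBA x Hx eps Heps) as [y [Hy Hd]]];
        exists y; split; auto; lra.
    + intros <-. apply Rle_antisym.
      * apply hyperspace_dist_le_of_approx; apply approx_within_subset; auto; lra.
      * apply (hausdorff_nonneg X hX _ _ M); auto; apply hyperspace_nonempty.
  - intros A B. apply hausdorff_sym, hX.
  - intros A B C.
    destruct (hyperspace_dist_approx A B _ (Rle_refl _)) as [HAB HBA].
    destruct (hyperspace_dist_approx B C _ (Rle_refl _)) as [HBC HCB].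
    apply hyperspace_dist_le_of_approx; [|rewrite Rplus_comm];
      eapply approx_within_trans; eauto.
Qed.

Lemma hyperspace_dist_gap : (forall x y : X, dist x y < M -> dist x y = 0) ->
  forall A B : hyperspace X, dist A B < M -> dist A B = 0.
Proof.
  intros Hgap A B Hlt.
  destruct (hyperspace_dist_approx A B _ (Rle_refl _)) as [HAB HBA].
  assert (Hzero : forall C D : X -> Prop, approx_within X (dist A B) C D ->
                    approx_within X 0 C D).
  { intros C D HCD x Hx d Hd. destruct (HCD x Hx (M - dist A B)) as [y [Hy Hxy]]; [lra|].
    exists y. rewrite (Hgap x y) by lra. split; auto; lra. }
  apply Rle_antisym; [|apply hyperspace_metric].
  apply hyperspace_dist_le_of_approx; apply Hzero; auto.
Qed.

Definition add_point (C : hyperspace X) (x : X) : hyperspace X :=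
  exist _ (fun y => proj1_sig C y \/ y = x)
    (conj (closed_union _ _ (proj1 (proj2_sig C)) (closed_singleton hX x))
      (match hyperspace_nonempty C with ex_intro _ c Hc => ex_intro _ c (or_introl Hc) end)).

Lemma dist_add_point (C : hyperspace X) c x e :
  proj1_sig C c -> dist c x < e -> dist C (add_point C x) < e.
Proof.
  intros Hc Hcx. eapply Rle_lt_trans; [|exact Hcx].
  apply hyperspace_dist_le_of_approx.
  - apply approx_within_subset; [exact hX|apply (dist_ge0 X hX)|]. simpl. auto.
  - intros y [Hy| ->] d Hd.
    + exists y. rewrite dist_xx by exact hX. pose proof (dist_ge0 X hX c x). split; auto; lra.
    + exists c. rewrite dist_sym by exact hX. split; auto; lra.
Qed.

Lemma chain_add_points e (c x : X) : chain e c x ->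
  forall C : hyperspace X, proj1_sig C c ->
  exists C' : hyperspace X, (forall y, proj1_sig C y -> proj1_sig C' y) /\ proj1_sig C' x /\ chain e C C'.
Proof.
  induction 1 as [y|y z w _ IH Hzw]; intros C HC.
  - exists C. repeat split; auto. constructor.
  - destruct (IH C HC) as [C1 [HCC1 [Hz HchC1]]].
    exists (add_point C1 w). repeat split.
    + intros v Hv. simpl. auto.
    + simpl. auto.
    + exact (chain_step e _ _ _ HchC1 (dist_add_point C1 z w e Hz Hzw)).
Qed.

Lemma chain_add_list (hc : well_chained X) e (He : 0 < e) (F : list X) :
  forall A : hyperspace X, exists C : hyperspace X,
    (forall y, proj1_sig A y -> proj1_sig C y) /\ (forall y, In y F -> proj1_sig C y) /\
    chain e A C.
Proof.
  intros A. destruct (hyperspace_nonempty A) as [a Ha].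
  induction F as [|y F IH].
  - exists A. repeat split; auto; [intros y []|constructor].
  - destruct IH as [C1 [HAC1 [HFC1 HchC1]]].
    destruct (chain_add_points e a y (hc e He a y) C1 (HAC1 a Ha)) as [C2 [HC12 [Hy HchC2]]].
    exists C2. repeat split; auto.
    + intros v [<-|Hv]; auto.
    + exact (chain_trans e _ _ _ HchC1 HchC2).
Qed.

Lemma hyperspace_well_chained (HXi : inhabited X) :
  compact X -> well_chained X -> well_chained (hyperspace X).
Proof.
  intros Hc hc e He.
  destruct (totally_bounded X hX Hc (e / 2)) as [F HF]; [lra|].
  assert (Hfull : forall A : hyperspace X, chain e A (full_set HXi)).
  { intros A. destruct (chain_add_list hc e He F A) as [C [_ [HFC HchC]]].
    apply (chain_step e _ C); [exact HchC|].
    apply Rle_lt_trans with (e / 2); [|lra].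
    apply hyperspace_dist_le_of_approx.
    - apply approx_within_subset; [exact hX|lra|]. simpl. auto.
    - intros v _ d Hd. destruct (HF v) as [y [Hy Hvy]]. exists y.
      split; [auto|lra]. }
  intros A B. apply (chain_trans e _ (full_set HXi)); [apply Hfull|].
  apply (chain_sym hyperspace_metric). apply Hfull.
Qed.

End Hyperspace.

Section GromovHausdorff.
Variables S Y : MSpace.
Hypothesis hS : is_metric S.
Hypothesis hY : is_metric Y.

Definition sum_space (c : R) : MSpace :=
  {| carrier := (S + Y)%type;
     dist := fun u v => match u, v with
       | inl a, inl a' => dist a a'
       | inr y, inr y' => dist y y'
       | _, _ => c end |}.

Lemma sum_space_metric c : 0 < c ->
  (forall a a' : S, dist a a' <= 2 * c) -> (forall y y' : Y, dist y y' <= 2 * c) ->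
  is_metric (sum_space c).
Proof.
  intros Hc HS HY. split; [|split; [|split]].
  - intros [a|y] [a'|y']; simpl; try lra; apply dist_ge0; assumption.
  - intros [a|y] [a'|y']; simpl; split; intros H; try discriminate; try lra.
    + f_equal. exact (dist_eq0 S hS _ _ H).
    + injection H as ->. apply dist_xx, hS.
    + f_equal. exact (dist_eq0 Y hY _ _ H).
    + injection H as ->. apply dist_xx, hY.
  - intros [a|y] [a'|y']; simpl; auto; apply dist_sym; assumption.
  - intros [a|y] [a'|y'] [a''|y'']; simpl.
    + apply (dist_triangle S hS).
    + pose proof (dist_ge0 S hS a a'). lra.
    + pose proof (HS a a''). lra.
    + pose proof (dist_ge0 Y hY y' y''). lra.
    + pose proof (dist_ge0 S hS a' a''). lra.
    + pose proof (HY y y''). lra.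
    + pose proof (dist_ge0 Y hY y y'). lra.
    + apply (dist_triangle Y hY).
Qed.

Definition GH_admissible (r : R) : Prop :=
  exists (Z : MSpace) (f : S -> Z) (g : Y -> Z),
    is_metric Z /\ isometric_embedding f /\ isometric_embedding g /\
    hausdorff (image f) (image g) <= r.

Lemma dGH_Rinf : dGH S Y = Rinf GH_admissible.
Proof. reflexivity. Qed.

Lemma GH_admissible_sum_space c : 0 < c -> inhabited S -> inhabited Y ->
  (forall a a' : S, dist a a' <= 2 * c) -> (forall y y' : Y, dist y y' <= 2 * c) ->
  GH_admissible c.
Proof.
  intros Hc [a0] [y0] HS HY.
  pose proof (sum_space_metric c Hc HS HY) as hZ.
  exists (sum_space c), inl, inr.
  split; [exact hZ|split; [intros ? ?; reflexivity|split; [intros ? ?; reflexivity|]]].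
  apply (hausdorff_le _ hZ).
  - exists (inl a0), a0. reflexivity.
  - exists (inr y0), y0. reflexivity.
  - intros u [a <-] d Hd. exists (inr y0). split; [exists y0; auto|simpl; lra].
  - intros u [y <-] d Hd. exists (inl a0). split; [exists a0; auto|simpl; lra].
Qed.

Lemma GH_admissible_approx r BS BY : inhabited S -> inhabited Y ->
  (forall a a' : S, dist a a' <= BS) -> (forall y y' : Y, dist y y' <= BY) ->
  GH_admissible r -> exists (Z : MSpace) (f : S -> Z) (g : Y -> Z),
    is_metric Z /\ isometric_embedding f /\ isometric_embedding g /\
    (forall a d, 0 < d -> exists y, dist (f a) (g y) < r + d) /\
    (forall y d, 0 < d -> exists a, dist (f a) (g y) < r + d).
Proof.
  intros [a0] [y0] HS HY [Z [f [g [hZ [Hf [Hg Hr]]]]]].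
  assert (HM : forall u v, image f u -> image g v -> dist u v <= BS + dist (f a0) (g y0) + BY).
  { intros u v [a <-] [y <-].
    pose proof (dist_triangle Z hZ (f a) (f a0) (g y)).
    pose proof (dist_triangle Z hZ (f a0) (g y0) (g y)).
    rewrite Hf, Hg in *. specialize (HS a a0). specialize (HY y0 y). lra. }
  destruct (hausdorff_approx Z hZ (image f) (image g) _ r
              (ex_intro _ (f a0) (ex_intro _ a0 eq_refl))
              (ex_intro _ (g y0) (ex_intro _ y0 eq_refl)) HM Hr) as [Hfg Hgf].
  exists Z, f, g. do 3 (split; [assumption|]). split.
  - intros a d Hd. destruct (Hfg (f a) (ex_intro _ a eq_refl) d Hd) as [v [[y <-] Hv]]. eauto.
  - intros y d Hd. destruct (Hgf (g y) (ex_intro _ y eq_refl) d Hd) as [v [[a <-] Hv]].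
    rewrite dist_sym in Hv by exact hZ. eauto.
Qed.

Lemma dGH_point M : inhabited S -> (forall a c : S, dist a c <= 0) ->
  inhabited Y -> (forall y y' : Y, dist y y' <= M) -> dGH S Y = diam Y / 2.
Proof.
  intros HSi HS0 HYi HM. destruct (diam_lub Y M HYi HM) as [Hub Hlub].
  assert (HD : 0 <= diam Y).
  { destruct HYi as [y0]. apply Rle_trans with (dist y0 y0); [apply dist_ge0, hY|].
    apply Hub. eauto. }
  rewrite dGH_Rinf. apply Rinf_eq.
  - intros r Hr.
    destruct (GH_admissible_approx r 0 (diam Y) HSi HYi HS0
                (fun y y' => Hub _ (ex_intro _ y (ex_intro _ y' eq_refl))) Hr)
      as [Z [f [g [hZ [Hf [Hg [_ HYS]]]]]]].
    assert (diam Y <= 2 * r); [|lra].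
    apply Hlub. intros s [y [y' ->]]. apply Rle_of_forall_lt_add. intros d Hd.
    destruct (HYS y (d / 2)) as [a Ha]; [lra|].
    destruct (HYS y' (d / 2)) as [a' Ha']; [lra|].
    assert (f a = f a') as Haa'.
    { apply (dist_eq0 Z hZ). rewrite Hf. apply Rle_antisym; auto. apply dist_ge0, hS. }
    rewrite Haa' in Ha. rewrite <- Hg.
    pose proof (dist_triangle Z hZ (g y) (f a') (g y')).
    rewrite (dist_sym Z hZ (g y) (f a')) in *. lra.
  - intros eps Heps. apply GH_admissible_sum_space; auto; [lra| |].
    + intros a a'. specialize (HS0 a a'). lra.
    + intros y y'. assert (dist y y' <= diam Y) by (apply Hub; eauto). lra.
Qed.

(* Lower bound: if the copies were at Hausdorff distance r < t/2, points of S
   matched to the two ends of a short step in Y would be at distance < t, hence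
   equal; following an e-chain from a point matched to a, every point of Y is
   matched to a, in particular one matched to b, although t <= dist a b. *)
Lemma dGH_two_valued t :
  (forall a c : S, dist a c <= t) -> (forall a c : S, dist a c < t -> dist a c = 0) ->
  (exists a b : S, t <= dist a b) ->
  inhabited Y -> (forall y y' : Y, dist y y' <= t) -> well_chained Y ->
  dGH S Y = t / 2.
Proof.
  intros HSt HS0 [a [b Hab]] HYi HYt HYc.
  rewrite dGH_Rinf. apply Rinf_eq.
  - intros r Hr. apply Rnot_lt_le. intros Hlt.
    destruct (GH_admissible_approx r t t (inhabits a) HYi HSt HYt Hr)
      as [Z [f [g [hZ [Hf [Hg [HSY HYS]]]]]]].
    set (d0 := (t / 2 - r) / 2).
    assert (Hd0 : 0 < d0) by (unfold d0; lra).
    destruct (HSY a d0 Hd0) as [ya Hya]. destruct (HSY b d0 Hd0) as [yb Hyb].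
    assert (Hstay : forall z, chain d0 ya z -> dist (f a) (g z) < r + d0).
    { induction 1 as [|y z w _ IH Hzw]; auto.
      destruct (HYS w d0 Hd0) as [c Hc].
      assert (Hac : dist (f a) (f c) < t).
      { pose proof (dist_triangle Z hZ (f a) (g z) (f c)).
        pose proof (dist_triangle Z hZ (g z) (g w) (f c)).
        rewrite (dist_sym Z hZ (g w) (f c)), Hg in *. unfold d0 in *. lra. }
      rewrite Hf in Hac. apply HS0 in Hac. rewrite <- Hf in Hac.
      rewrite (dist_eq0 Z hZ _ _ Hac). exact Hc. }
    specialize (Hstay yb (HYc d0 Hd0 ya yb)).
    pose proof (dist_triangle Z hZ (f a) (g yb) (f b)).
    rewrite (dist_sym Z hZ (g yb) (f b)), Hf in *. unfold d0 in *. lra.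
  - assert (Ht : 0 <= t) by (pose proof (dist_ge0 S hS a b); pose proof (HSt a b); lra).
    intros eps Heps. apply GH_admissible_sum_space; auto; [lra| |].
    + intros a0 a1. specialize (HSt a0 a1). lra.
    + intros y y'. specialize (HYt y y'). lra.
Qed.

End GromovHausdorff.

Section Simplex.
Variables (t : R) (p : nat).

Lemma simplex_metric : 0 < t -> is_metric (simplex t p).
Proof.
  intros Ht. split; [|split; [|split]]; simpl.
  - intros [i Hi] [j Hj]; simpl. destruct Nat.eq_dec; lra.
  - intros [i Hi] [j Hj]; simpl. destruct (Nat.eq_dec i j) as [<-|Hij]; split; intros H; try lra.
    + f_equal. apply proof_irrelevance.
    + injection H. contradiction.
  - intros [i Hi] [j Hj]; simpl.
    destruct (Nat.eq_dec i j), (Nat.eq_dec j i); subst; congruence.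
  - intros [i Hi] [j Hj] [k Hk]; simpl.
    destruct (Nat.eq_dec i k), (Nat.eq_dec i j), (Nat.eq_dec j k); subst; try lra; congruence.
Qed.

Lemma simplex_dist_le : 0 <= t -> forall a c : simplex t p, dist a c <= t.
Proof. intros Ht [i Hi] [j Hj]; simpl. destruct Nat.eq_dec; lra. Qed.

Lemma simplex_dist_gap : forall a c : simplex t p, dist a c < t -> dist a c = 0.
Proof. intros [i Hi] [j Hj]; simpl. destruct Nat.eq_dec; lra. Qed.

Lemma simplex_inhabited : (1 <= p)%nat -> inhabited (simplex t p).
Proof. intros Hp. exact (inhabits (exist (fun i => (i < p)%nat) 0%nat Hp)). Qed.

Lemma simplex_far_pair : (2 <= p)%nat -> exists a b : simplex t p, t <= dist a b.
Proof.
  intros Hp. assert (H0 : (0 < p)%nat) by lia. assert (H1 : (1 < p)%nat) by lia.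
  exists (exist (fun i => (i < p)%nat) 0%nat H0), (exist (fun i => (i < p)%nat) 1%nat H1).
  simpl. destruct (Nat.eq_dec 0 1); [discriminate|lra].
Qed.

End Simplex.

Lemma simplex_one_dist_le0 t : forall a c : simplex t 1, dist a c <= 0.
Proof.
  intros [i Hi] [j Hj]; simpl. destruct Nat.eq_dec; [lra|lia].
Qed.

Lemma hyperspace_far_pair (X : MSpace) (hX : is_metric X) t :
  (exists x y : X, t <= dist x y) -> exists A B : hyperspace X, t <= dist A B.
Proof.
  intros [x [y Hxy]]. exists (singleton_set X hX x), (singleton_set X hX y).
  rewrite hyperspace_dist_singleton. exact Hxy.
Qed.

Theorem mainTheorem17 (X : MSpace) (HX : continuum X) (t : R) (p : nat)
  (ht : diam X <= t) (ht0 : 0 < t) (hp : (1 <= p)%nat) :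
  dGH (simplex t p) X = dGH (hyperspace (simplex t p)) (hyperspace X).
Proof.
  destruct HX as [hX [HXi [Hcpt Hconn]]].
  destruct (compact_bounded X hX Hcpt HXi) as [M HM].
  assert (HXt : forall x y : X, dist x y <= t).
  { intros x y. apply Rle_trans with (diam X); auto. apply (diam_lub X M HXi HM). eauto. }
  pose proof (hyperspace_metric X hX t HXt) as hHX.
  pose proof (simplex_metric t p ht0) as hS.
  pose proof (simplex_dist_le t p (Rlt_le _ _ ht0)) as HSt.
  pose proof (hyperspace_metric _ hS t HSt) as hHS.
  pose proof (simplex_inhabited t p hp) as HSi.
  pose proof (connected_well_chained X hX Hconn) as HXc.
  destruct (Nat.eq_dec p 1) as [->|Hp1].
  - rewrite (dGH_point _ _ hS hX t), (dGH_point _ _ hHS hHX t), (diam_hyperspace X hX t);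
      auto using hyperspace_inhabited, simplex_one_dist_le0.
    + apply hyperspace_dist_le; auto using simplex_one_dist_le0.
    + apply hyperspace_dist_le; auto.
  - pose proof (simplex_far_pair t p ltac:(lia)) as Hfar.
    rewrite (dGH_two_valued _ _ hS hX t), (dGH_two_valued _ _ hHS hHX t);
      auto using simplex_dist_gap, hyperspace_inhabited, hyperspace_far_pair.
    + apply hyperspace_dist_le; auto.
    + apply (hyperspace_dist_gap _ hS t HSt), simplex_dist_gap.
    + apply hyperspace_dist_le; auto.
    + apply (hyperspace_well_chained X hX t HXt); auto.
Qed.
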